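(* Fix an arbitrary execution of Algorithm $\mathrm{tree}(G)$ on $G$, and let $r$ and $F$ be as defined in the context. If $uv$ is an edge of $G$ with $d_F(u)\ge 2$, then $r(u)\ge r(v)$.
   Context: $G$ is a finite connected simple undirected graph containing a vertex $a$ with $d_G(a)\ge 2$. For a subtree $T$ of $G$ and a vertex $u$ of $T$: - $V_T(u)$ is the set of vertices $v\in V(G)\setminus V(T)$ with $uv\in E(G)$. - $E_T(u)$ is the set of edges $uv$ of $G$ with $v\in V_T(u)$. - If $|V_T(u)|=1$, then $v_T(u)$ denotes the unique vertex of $V_T(u)$. Three sets of vertices of $T$ are defined: - $W_2(T)=\{u\in V(T): |V_T(u)|\ge 2\}$. - $W_1(T)=\{u\in V(T): |V_T(u)|=1,\ |V_{T\cup E_T(u)}(v_T(u))|\ge 2\}$. - $W_0(T)=\{u\in V(T): |V_T(u)|=1,\ |V_{T\cup E_T(u)}(v_T(u))|\le 1\}$. Algorithm $\mathrm{tree}(G)$ runs as follows. 1. Start with $T=\{a\}$. 2. While $V(T)\ne V(G)$: - If $W_2(T)\ne\emptyset$, pick an arbitrary $u\in W_2(T)$. - Else, if $W_1(T)\neq\emptyset$, pick an arbitrary $u\in W_1(T)$. - Else, let $u$ be the vertex of $W_0(T)$ that joined $V(T)$ most recently. - Set $T:=T\cup E_T(u)$ (''expand $T$ at $u$''). 3. Return $T$. Now fix an execution and let $T$ be the returned spanning tree, rooted at $a$. For $v\ne a$, let $p(v)$ be the parent of $v$ in $T$. For each vertex $u$ with $d_T(u)\ge 2$, let $T_u$ be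 the tree just before the (unique) expansion at $u$. The rank $r:V(G)\to\mathbb{Z}$ is defined by $r(a)=1$ and, for each edge $uv$ of $T$ with $u=p(v)$: - $r(v)=r(u)$ if $u\in W_2(T_u)$; - $r(v)=1+\max_{w\in V(T_u)} r(w)$ otherwise. $F$ is the spanning forest obtained from $T$ by deleting every edge $uv$ with $r(u)\ne r(v)$, and $d_F(u)$ denotes the degree of $u$ in $F$. *)

From mathcomp Require Import all_boot.
Set Implicit Arguments. Unset Strict Implicit. Unset Printing Implicit Defensive.

(* A simple graph on a finite type V is a symmetric irreflexive relation e.
   Subtrees built by Algorithm tree(G) are determined by their vertex sets
   (the edges are those added at each expansion), so the algorithm state is
   represented by a vertex set S : {set V}. *)
Section TreeAlgo.
Variables (V : finType) (e : rel V).

Definition outnb (S : {set V}) (u : V) : {set V} := [set v | e u v & v \notin S].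

Definition W2 (S : {set V}) : {set V} := [set u in S | 1 < #|outnb S u|].
Definition W1 (S : {set V}) : {set V} :=
  [set u in S | [exists v, (outnb S u == [set v]) && (1 < #|outnb (v |: S) v|)]].
Definition W0 (S : {set V}) : {set V} :=
  [set u in S | [exists v, (outnb S u == [set v]) && (#|outnb (v |: S) v| <= 1)]].

Definition expand (S : {set V}) (u : V) : {set V} := S :|: outnb S u.

(* An execution is given by the sequence us of expansion vertices, in order.
   state a us i = vertex set of the tree after the first i expansions. *)
Definition state (a : V) (us : seq V) (i : nat) : {set V} :=
  foldl expand [set a] (take i us).

Definition join_time (a : V) (us : seq V) (v : V) : nat :=
  find (fun i => v \in state a us i) (iota 0 (size us).+1).

Definition valid_choice (a : V) (us : seq V) (i : nat) (u : V) : bool :=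
  let S := state a us i in
  if W2 S != set0 then u \in W2 S
  else if W1 S != set0 then u \in W1 S
  else (u \in W0 S) &&
       [forall w in W0 S, join_time a us w <= join_time a us u].

Definition execution (a : V) (us : seq V) : Prop :=
  (forall i, i < size us ->
     state a us i != [set: V] /\ valid_choice a us i (nth a us i)) /\
  state a us (size us) = [set: V].

Definition is_rank (a : V) (us : seq V) (r : V -> nat) : Prop :=
  r a = 1 /\
  forall i, i < size us ->
    forall v, v \in outnb (state a us i) (nth a us i) ->
      r v = if nth a us i \in W2 (state a us i) then r (nth a us i)
            else (\max_(w in state a us i) r w).+1.

Definition tedge (a : V) (us : seq V) (x y : V) : bool :=
  [exists i : 'I_(size us), (nth a us i == x) && (y \in outnb (state a us i) x)].

(* degree of u in the forest F = T minus edges joining different ranks *)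
Definition dF (a : V) (us : seq V) (r : V -> nat) (u : V) : nat :=
  #|[set w | (tedge a us u w || tedge a us w u) && (r u == r w)]|.

End TreeAlgo.

(* Along any run, a vertex of W2(T) has maximum rank in T: its children inherit
   its rank, and when W2(T) is empty the newly added vertices get a rank above
   everything in T, while W2 can only lose old vertices as T grows.  Now if
   d_F(u) >= 2, then, since u has a single parent, some child w of u has
   r(w) = r(u); this forces u to lie in W2(T_u), as otherwise r(w) would exceed
   r(u).  A neighbour v of u is then either in T_u, where r(u) is maximal, or a
   child of u, of rank r(u). *)
From mathcomp Require Import all_boot.
Set Implicit Arguments. Unset Strict Implicit. Unset Printing Implicit Defensive.

Section TreeRun.
Variables (V : finType) (e : rel V) (a : V) (us : seq V).

Local Notation S i := (state e a us i).
Local Notation u_ i := (nth a us i).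

Lemma state0 : S 0 = [set a].
Proof. by rewrite /state take0. Qed.

Lemma stateS i : i < size us -> S i.+1 = expand e (S i) (u_ i).
Proof. by move=> lt_i; rewrite /state (take_nth a lt_i) foldl_rcons. Qed.

Lemma sub_foldl_expand s (T : {set V}) : T \subset foldl (expand e) T s.
Proof.
elim: s T => [|x s IHs] T /=; first exact: subxx.
exact: subset_trans (subsetUl _ _) (IHs _).
Qed.

Lemma state_mono i j : i <= j -> S i \subset S j.
Proof.
by move=> le_ij; rewrite /state -(subnKC le_ij) takeD foldl_cat sub_foldl_expand.
Qed.

Lemma outnb_subr (T T' : {set V}) x : T \subset T' -> outnb e T' x \subset outnb e T x.
Proof.
move=> sTT'; apply/subsetP=> z; rewrite !inE => /andP[-> zT'] /=.
by apply: contra zT'; apply: (subsetP sTT').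
Qed.

Lemma W2_subr (T T' : {set V}) x :
  T \subset T' -> x \in T -> x \in W2 e T' -> x \in W2 e T.
Proof.
move=> sTT' xT /setIdP[_ gt1]; rewrite inE xT.
exact: leq_trans gt1 (subset_leq_card (outnb_subr x sTT')).
Qed.

Lemma valid_choice_in_state i u : valid_choice e a us i u -> u \in S i.
Proof.
rewrite /valid_choice; case: ifP => _; first by case/setIdP.
by case: ifP => _; [case/setIdP | case/andP=> /setIdP[]].
Qed.

Lemma valid_choice_W2 i u :
  valid_choice e a us i u -> u \notin W2 e (S i) -> W2 e (S i) = set0.
Proof. by rewrite /valid_choice; case: eqP => // _ /= ->. Qed.

Lemma outnb_state_inj i j v :
  i < size us -> j < size us ->
  v \in outnb e (S i) (u_ i) -> v \in outnb e (S j) (u_ j) -> i = j.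
Proof.
wlog lt_ij : i j / i < j.
  move=> IH lt_i lt_j vi vj.
  by case: (ltngtP i j) => // [lt_ij | lt_ji]; [exact: IH | exact/esym/IH].
move=> lt_i _ vi; rewrite inE => /andP[_ vNSj].
have vSi1 : v \in S i.+1 by rewrite stateS // inE vi orbT.
by rewrite (subsetP (state_mono lt_ij) v vSi1) in vNSj.
Qed.

Lemma tedge_parent_uniq x y v : tedge e a us x v -> tedge e a us y v -> x = y.
Proof.
move=> /existsP[i /andP[/eqP <- vi]] /existsP[j /andP[/eqP <- vj]].
by rewrite (outnb_state_inj (ltn_ord i) (ltn_ord j) vi vj).
Qed.

Lemma dF_gt1_child (r : V -> nat) u :
  1 < dF e a us r u -> exists2 w, tedge e a us u w & r u = r w.
Proof.
case/card_gt1P=> w1 [w2 [+ + neq12]]; rewrite !inE.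
case/andP=> /orP[uw1 | w1u] /eqP r1; first by exists w1.
case/andP=> /orP[uw2 | w2u] /eqP r2; first by exists w2.
have parent_u : w1 = w2 := tedge_parent_uniq w1u w2u.
by rewrite parent_u eqxx in neq12.
Qed.

Variable r : V -> nat.
Hypotheses (run : execution e a us) (rank : is_rank e a us r).

Lemma rank_child i v :
  i < size us -> v \in outnb e (S i) (u_ i) ->
  r v = if u_ i \in W2 e (S i) then r (u_ i) else (\max_(w in S i) r w).+1.
Proof. by move=> lt_i v_child; exact: (proj2 rank i lt_i v v_child). Qed.

Lemma W2_rank_max i x y :
  i <= size us -> x \in W2 e (S i) -> y \in S i -> r y <= r x.
Proof.
elim: i x y => [|i IHi] x y lt_i.
  by rewrite state0 => /setIdP[/set1P-> _] /set1P->.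
have [_ choice] := run.1 i lt_i; rewrite stateS //.
set T := S i in IHi choice *; set u := u_ i in choice *.
have IH := IHi _ _ (ltnW lt_i).
have sTT' : T \subset expand e T u by apply: subsetUl.
move=> xW2 yT'; have /setUP[xT | x_child] : x \in expand e T u by case/setIdP: xW2.
  have {}xW2 : x \in W2 e T := W2_subr sTT' xT xW2.
  case/setUP: yT' => [yT | y_child]; first exact: IH xW2 yT.
  rewrite (rank_child lt_i y_child); case: ifP => uW2.
    exact: IH xW2 (valid_choice_in_state choice).
  by move/negbT/(valid_choice_W2 choice): uW2 xW2 => ->; rewrite inE.
rewrite (rank_child lt_i x_child).
case/setUP: yT' => [yT | y_child]; last by rewrite (rank_child lt_i y_child).
case: ifP => uW2; first exact: IH.
exact: leqW (leq_bigmax_cond _ yT).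
Qed.

Lemma W2_of_child_same_rank i w :
  i < size us -> w \in outnb e (S i) (u_ i) -> r w = r (u_ i) -> u_ i \in W2 e (S i).
Proof.
move=> lt_i w_child /eqP; apply: contraTT => uNW2.
rewrite (rank_child lt_i w_child) (negbTE uNW2) eq_sym neq_ltn ltnS.
have u_in_S := valid_choice_in_state (run.1 i lt_i).2.
by rewrite (leq_bigmax_cond _ u_in_S).
Qed.

End TreeRun.

(* The hypotheses on G only ensure that a run exists; the argument does not use them. *)
Theorem lemma3 (V : finType) (e : rel V) (a : V) (us : seq V) (r : V -> nat) :
  symmetric e -> irreflexive e -> (forall x y, connect e x y) ->
  1 < #|[set v | e a v]| ->
  execution e a us -> is_rank e a us r ->
  forall u v, e u v -> 1 < dF e a us r u -> r v <= r u.
Proof.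
move=> _ _ _ _ run rank u v uv /dF_gt1_child[w /existsP[i /andP[/eqP u_i w_child]] r_uw].
subst u; have lt_i := ltn_ord i.
have uW2 := W2_of_child_same_rank run rank lt_i w_child (esym r_uw).
case: (boolP (v \in state e a us i)) => [v_in_S | v_notin_S].
  exact: (W2_rank_max run rank (ltnW lt_i) uW2 v_in_S).
have v_child : v \in outnb e (state e a us i) (nth a us i) by rewrite inE uv.
by rewrite (rank_child rank lt_i v_child) uW2.
Qed.
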